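(* Let $Q$ be a smooth $m$-dimensional manifold with local coordinates $(q^\lambda)$, let $Q_R=\mathbb R\times Q\to\mathbb R$ with coordinate $\tau$ on $\mathbb R$, and let $(\tau,q^\lambda,q^\lambda_\tau)$, $(\tau,q^\lambda,q^\lambda_\tau,q^\lambda_{\tau\tau})$ be the induced coordinates on the first and second order jet manifolds of sections of $Q_R\to\mathbb R$. Let $N\ge1$ be an integer, let $G_{\alpha_1\ldots\alpha_{2N}}(q^\nu)$ be the components of a symmetric tensor field on $Q$ such that $G=G_{\alpha_1\ldots\alpha_{2N}}\dot q^{\alpha_1}\cdots\dot q^{\alpha_{2N}}>0$ on $TQ$ minus its zero section, and let $A=A_\mu(q^\nu)dq^\mu$ be a one-form on $Q$ with $F_{\lambda\mu}=\partial_\lambda A_\mu-\partial_\mu A_\lambda$. Consider the Lagrangian $L=(G^{1/2N}+q^\mu_\tau A_\mu)d\tau$, $G=G_{\alpha_1\ldots\alpha_{2N}}q^{\alpha_1}_\tau\cdots q^{\alpha_{2N}}_\tau$, on the complement in $J^1Q_R$ of $\mathbb R\times(\text{zero section})$, with Euler--Lagrange expressions $\mathcal E_\lambda=\partial_\lambda\mathcal L-d_\tau\partial^\tau_\lambda\mathcal L$, and define $$E_\beta=\Big(\tfrac{1}{2N}\partial_\beta G_{\mu\alpha_2\ldots\alpha_{2N}}-\partial_\mu G_{\beta\alpha_2\ldots\alpha_{2N}}\Big)q^\mu_\tau q^{\alpha_2}_\tau\cdots q^{\alpha_{2N}}_\tau-(2N-1)G_{\beta\mu\alpha_3\ldots\alpha_{2N}}q^\mu_{\tau\tau}q^{\alpha_3}_\tau\cdots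 q^{\alpha_{2N}}_\tau+G^{1-1/2N}F_{\beta\mu}q^\mu_\tau .$$ Let $W_G$ be the submanifold of $J^1Q_R$ given by $G=1$. Then any solution of the Lagrange equations $\mathcal E_\lambda=0$ whose first jet prolongation lies in $W_G$ is a solution of the equations $E_\beta=0$.
   Context: A solution means a section $\tau\mapsto(\tau,s^\lambda(\tau))$ of $Q_R\to\mathbb R$ (with nowhere vanishing velocity) whose jet prolongations satisfy the stated equations; $d_\tau=\partial_\tau+q^\lambda_\tau\partial_\lambda+q^\lambda_{\tau\tau}\partial^\tau_\lambda+\cdots$ is the total derivative and $\partial^\tau_\lambda=\partial/\partial q^\lambda_\tau$. One has $\mathcal E_\lambda=E_\beta[\delta^\beta_\lambda-q^\beta_\tau G_{\lambda\nu_2\ldots\nu_{2N}}q^{\nu_2}_\tau\cdots q^{\nu_{2N}}_\tau G^{-1}]G^{1/2N-1}$. *)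

(* Everything is written in one local coordinate
   chart: Q is represented by an open set U of R^m ('rV[R]_m). *)
From HB Require Import structures.
From mathcomp Require Import all_boot all_order all_algebra.
From mathcomp Require Import all_classical all_reals all_analysis.
Set Implicit Arguments. Unset Strict Implicit. Unset Printing Implicit Defensive.
Import Order.TTheory GRing.Theory Num.Theory.
Import numFieldNormedType.Exports.
Local Open Scope classical_set_scope.
Local Open Scope ring_scope.

Definition iter_dir {R : realType} {V W : normedModType R}
  (vs : seq V) (f : V -> W) : V -> W :=
  foldr (fun v g => fun x => derive g x v) f vs.

Definition smooth_on {R : realType} {V W : normedModType R}
  (U : set V) (f : V -> W) : Prop :=
  forall (vs : seq V) (x : V), U x -> differentiable (iter_dir vs f) x.

Definition ebasis {R : realType} {m : nat} (l : 'I_m) : 'rV[R]_m :=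
  delta_mx 0 l.

Definition pd {R : realType} {m : nat} (l : 'I_m) (f : 'rV[R]_m -> R)
  (q : 'rV[R]_m) : R := derive f q (ebasis l).

(* G(q, v) = G_{a1..a2N}(q) v^{a1} ... v^{a2N}; components Gc indexed by
   lists of indices (only lists of length 2N are relevant) *)
Definition Gfull {R : realType} {m : nat} (Gc : seq 'I_m -> 'rV[R]_m -> R)
  (N : nat) (q v : 'rV[R]_m) : R :=
  \sum_(a : (N.*2).-tuple 'I_m) Gc (val a) q * \prod_(i <- val a) v 0 i.

Definition Lag {R : realType} {m : nat} (Gc : seq 'I_m -> 'rV[R]_m -> R)
  (Ac : 'I_m -> 'rV[R]_m -> R) (N : nat) (q v : 'rV[R]_m) : R :=
  powR (Gfull Gc N q v) (N.*2%:R)^-1 + \sum_(mu < m) v 0 mu * Ac mu q.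

Definition Fc {R : realType} {m : nat} (Ac : 'I_m -> 'rV[R]_m -> R)
  (l mu : 'I_m) (q : 'rV[R]_m) : R := pd l (Ac mu) q - pd mu (Ac l) q.

Definition vel {R : realType} {m : nat} (s : R -> 'rV[R]_m) (t : R) : 'rV[R]_m :=
  derive s t 1.
Definition acc {R : realType} {m : nat} (s : R -> 'rV[R]_m) (t : R) : 'rV[R]_m :=
  derive (vel s) t 1.

(* Euler-Lagrange expression  E_l = d_l L - d_tau (d^tau_l L), pulled back
   along the second jet prolongation of the section tau |-> s tau *)
Definition ELexpr {R : realType} {m : nat} (Gc : seq 'I_m -> 'rV[R]_m -> R)
  (Ac : 'I_m -> 'rV[R]_m -> R) (N : nat) (s : R -> 'rV[R]_m) (l : 'I_m)
  (t : R) : R :=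
  pd l (fun q => Lag Gc Ac N q (vel s t)) (s t)
  - derive (fun t' => pd l (Lag Gc Ac N (s t')) (vel s t')) t 1.

Definition Eexpr {R : realType} {m : nat} (Gc : seq 'I_m -> 'rV[R]_m -> R)
  (Ac : 'I_m -> 'rV[R]_m -> R) (N : nat) (b : 'I_m) (q v w : 'rV[R]_m) : R :=
  \sum_(mu < m) \sum_(a : (N.*2 - 1).-tuple 'I_m)
     ((N.*2%:R)^-1 * pd b (Gc (mu :: val a)) q - pd mu (Gc (b :: val a)) q)
       * v 0 mu * \prod_(i <- val a) v 0 i
  - (N.*2%:R - 1) * \sum_(mu < m) \sum_(a : (N.*2 - 2).-tuple 'I_m)
       Gc (b :: mu :: val a) q * w 0 mu * \prod_(i <- val a) v 0 i
  + powR (Gfull Gc N q v) (1 - (N.*2%:R)^-1) * \sum_(mu < m) Fc Ac b mu q * v 0 mu.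

(* On the level set G = 1 every factor G^(1/2N - 1) produced by differentiating
   G^(1/2N) equals 1.  The position part of the Euler-Lagrange expression is then
   (1/2N) d_b G + v^mu d_b A_mu, and since G = 1 along the whole solution the momentum
   d^tau_b L coincides, as a function of tau, with
   G_{b a_2 .. a_2N} v^a_2 .. v^a_2N + A_b.  Its tau-derivative consists of the
   acceleration term, where symmetry of G makes all 2N - 1 velocity slots contribute
   equally, and the transport terms v^mu d_mu G and v^mu d_mu A_b.  Collecting terms,
   E_b is exactly the Euler-Lagrange expression, which vanishes. *)

From HB Require Import structures.
From mathcomp Require Import all_boot all_order all_algebra.
From mathcomp Require Import all_classical all_reals all_analysis.
From mathcomp Require Import ring.
Set Implicit Arguments. Unset Strict Implicit. Unset Printing Implicit Defensive.
Import Order.TTheory GRing.Theory Num.Theory.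
Import numFieldNormedType.Exports.
Local Open Scope classical_set_scope.
Local Open Scope ring_scope.

Section Derivatives.
Variables (R : realType) (V W : normedModType R).

Lemma is_derive_big_sum (I : Type) (r : seq I) (h : I -> V -> W) (dh : I -> W)
    (x v : V) :
  (forall i, is_derive x v (h i) (dh i)) ->
  is_derive x v (fun y => \sum_(i <- r) h i y) (\sum_(i <- r) dh i).
Proof.
move=> hdh; elim: r => [|i r IHr].
  by under eq_fun do rewrite big_nil; rewrite big_nil; exact: is_derive_cst.
under eq_fun do rewrite big_cons; rewrite big_cons; exact: is_deriveD.
Qed.

Lemma derive_line (f : V -> W) (a v : V) :
  'D_v f a = derive (fun h : R => f (h *: v + a)) 0 1.
Proof.
rewrite /derive; set g1 := fun h => h^-1 *: _; set g2 := fun h => h^-1 *: _.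
suff -> : g1 = g2 by [].
by rewrite funeqE /g1 /g2 => h /=; rewrite addr0 scale0r add0r [_%:A]mulr1.
Qed.

Lemma is_derive_line (f : V -> W) (a v : V) : differentiable f a ->
  is_derive (0 : R) 1 (fun h : R => f (h *: v + a)) ('D_v f a).
Proof.
move=> df; rewrite derive_line; apply: derivableP.
exact/(derivable1P f a v).1/diff_derivable.
Qed.

End Derivatives.

Section RealDerivatives.
Variable R : realType.

Lemma derivable_big_prod (I : Type) (r : seq I) (g : I -> R -> R) (x : R) :
  (forall i, derivable (g i) x 1) ->
  derivable (fun y => \prod_(i <- r) g i y) x 1.
Proof.
move=> dg; elim: r => [|i r IHr].
  by under eq_fun do rewrite big_nil; exact: derivable_cst.
by under eq_fun do rewrite big_cons; exact: derivableM.
Qed.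

Lemma is_derive_powR (f : R -> R) (x df c : R) :
  is_derive x 1 f df -> 0 < f x ->
  is_derive x 1 (fun y => f y `^ c) (c * f x `^ (c - 1) * df).
Proof.
move=> fdf fx_gt0; exact: is_derive1_comp (is_derive1_powR c fx_gt0) fdf.
Qed.

Lemma is_derive_mxE (p q : nat) (M : R -> 'M[R]_(p, q)) (t : R) i j :
  derivable M t 1 -> is_derive t 1 (fun x => M x i j) ('D_1 M t i j).
Proof.
move=> dM; split; first exact: (derivable_mxP _ _ _).1 dM i j.
by rewrite derive_mx // mxE.
Qed.

Lemma is_derive_mul (f g : R -> R) (x df dg : R) :
  is_derive x 1 f df -> is_derive x 1 g dg ->
  is_derive x 1 (fun y => f y * g y) (f x * dg + g x * df).
Proof. by move=> fdf gdg; have := is_deriveM fdf gdg. Qed.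

End RealDerivatives.

Section DiagonalForms.
Variables (R : realType) (m : nat).

Definition diag_form k (C : seq 'I_m -> R) (g : 'I_m -> R) : R :=
  \sum_(a : k.-tuple 'I_m) C (val a) * \prod_(i <- val a) g i.

Definition symmetric_coef (T : Type) k (C : seq 'I_m -> T) : Prop :=
  forall a b, size a = k -> perm_eq a b -> C a = C b.

Lemma big_tuple_cons k (F : seq 'I_m -> R) :
  \sum_(a : k.+1.-tuple 'I_m) F (val a) =
  \sum_(mu < m) \sum_(a : k.-tuple 'I_m) F (mu :: val a).
Proof.
rewrite pair_big /=.
rewrite (reindex (fun a : k.+1.-tuple 'I_m => (thead a, behead_tuple a))) /=.
  by apply: eq_bigr => a _; rewrite [in LHS](tuple_eta a).
exists (fun p => cons_tuple p.1 p.2) => [a _|[mu a] _] /=.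
  by apply: val_inj; rewrite /= [in RHS](tuple_eta a).
by rewrite theadE; congr pair; apply: val_inj.
Qed.

Lemma diag_form_cons k C g :
  diag_form k.+1 C g = \sum_(mu < m) g mu * diag_form k (fun a => C (mu :: a)) g.
Proof.
rewrite /diag_form (big_tuple_cons _ (fun a => C a * \prod_(i <- a) g i)).
apply: eq_bigr => mu _; rewrite mulr_sumr.
by apply: eq_bigr => a _; rewrite big_cons mulrCA.
Qed.

Lemma eq_diag_form k C1 C2 g :
  (forall a, size a = k -> C1 a = C2 a) -> diag_form k C1 g = diag_form k C2 g.
Proof. by move=> eqC; apply: eq_bigr => a _; rewrite eqC // size_tuple. Qed.

Lemma symmetric_coef_cons (T : Type) k (C : seq 'I_m -> T) mu :
  symmetric_coef k.+1 C -> symmetric_coef k (fun a => C (mu :: a)).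
Proof. by move=> symC a b sz_a ab; apply: symC; rewrite ?perm_cons //= sz_a. Qed.

Lemma diag_form_swap k C g mu nu : symmetric_coef k.+2 C ->
  diag_form k (fun a => C [:: mu, nu & a]) g =
  diag_form k (fun a => C [:: nu, mu & a]) g.
Proof.
move=> symC; apply: eq_diag_form => a sz_a; apply: symC; first by rewrite /= sz_a.
by apply/permP => p /=; rewrite addnCA.
Qed.

(* By symmetry of [C] each of the [k] slots contributes the same term. *)
Lemma is_derive_diag_form k C (g : 'I_m -> R -> R) (dg : 'I_m -> R) (x : R) :
  symmetric_coef k C -> (forall i, is_derive x 1 (g i) (dg i)) ->
  is_derive x 1 (fun y => diag_form k C (g^~ y))
    (k%:R * \sum_(mu < m) dg mu * diag_form k.-1 (fun a => C (mu :: a)) (g^~ x)).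
Proof.
elim: k C => [|k IHk] C symC gdg.
  rewrite mul0r; have -> : (fun y => diag_form 0 C (g^~ y)) = cst (diag_form 0 C (g^~ x)).
    by apply/funext => y; apply: eq_bigr => a _; rewrite (tuple0 a) !big_nil.
  exact: is_derive_cst.
under eq_fun do rewrite diag_form_cons.
apply: is_derive_eq.
  apply: is_derive_big_sum => mu; apply: is_derive_mul.
  by apply: IHk => //; exact: symmetric_coef_cons.
rewrite /= big_split /= mulrSr mulrDl mul1r; congr (_ + _); last first.
  by apply: eq_bigr => mu _; rewrite mulrC.
case: k {IHk} symC => [|k] symC; first by rewrite big1 ?mul0r // => mu _; rewrite mul0r mulr0.
under eq_bigr do rewrite mulrCA mulr_sumr.
rewrite -mulr_sumr exchange_big /=; congr (_ * _); apply: eq_bigr => nu _.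
rewrite diag_form_cons mulr_sumr; apply: eq_bigr => mu _.
by rewrite (diag_form_swap _ _ _ symC) mulrCA.
Qed.

End DiagonalForms.

Section Coordinates.
Variables (R : realType) (m : nat).
Implicit Types (f : 'rV[R]_m -> R) (q v : 'rV[R]_m).

Lemma pd_line f q l (d : R) :
  is_derive (0 : R) 1 (fun h : R => f (h *: ebasis l + q)) d -> pd l f q = d.
Proof. by move=> fd; rewrite /pd derive_line derive_val. Qed.

Lemma is_derive_line_coord v (e : 'rV[R]_m) (x : R) i :
  is_derive x 1 (fun h : R => (h *: e + v) 0 i) (e 0 i).
Proof.
under eq_fun do rewrite !mxE.
by apply: is_derive_eq; rewrite scaler0 add0r addr0 [_%:A]mulr1.
Qed.

Lemma sum_ebasis_mul l (X : 'I_m -> R) :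
  \sum_(mu < m) (ebasis l : 'rV[R]_m) 0 mu * X mu = X l.
Proof.
rewrite (bigD1 l) //= big1 ?addr0; first by rewrite /ebasis mxE !eqxx mul1r.
by move=> mu /negbTE mu_l; rewrite /ebasis mxE mu_l andbF mul0r.
Qed.

Lemma is_derive_comp_curve f (s : R -> 'rV[R]_m) (t : R) :
  differentiable s t -> differentiable f (s t) ->
  is_derive t 1 (fun x => f (s x)) (\sum_(mu < m) vel s t 0 mu * pd mu f (s t)).
Proof.
move=> ds df; have dfs := differentiable_comp ds df.
apply: DeriveDef; first exact: diff_derivable.
rewrite (deriveE _ dfs) diff_comp //= -(deriveE _ ds) -/(vel s t).
rewrite [X in 'd f (s t) X]row_sum_delta linear_sum; apply: eq_bigr => mu _.
by rewrite linearZ /= -deriveE.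
Qed.

Lemma is_derive_diag_form_curve k (C : seq 'I_m -> 'rV[R]_m -> R)
    (s : R -> 'rV[R]_m) (t : R) :
  symmetric_coef k C -> differentiable s t -> derivable (vel s) t 1 ->
  (forall a, size a = k -> differentiable (C a) (s t)) ->
  is_derive t 1 (fun x => diag_form k (fun a => C a (s x)) (vel s x 0))
    (k%:R * \sum_(mu < m) acc s t 0 mu *
        diag_form k.-1 (fun a => C (mu :: a) (s t)) (vel s t 0)
     + \sum_(a : k.-tuple 'I_m) (\prod_(i <- val a) vel s t 0 i) *
        \sum_(mu < m) vel s t 0 mu * pd mu (C a) (s t)).
Proof.
move=> symC ds dv dC.
have dvel i : is_derive t 1 (fun x => vel s x 0 i) (acc s t 0 i).
  exact: is_derive_mxE.
have dprod (a : k.-tuple 'I_m) : is_derive t 1 (fun x => \prod_(i <- val a) vel s x 0 i)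
    ('D_1 (fun x => \prod_(i <- val a) vel s x 0 i) t).
  by apply/derivableP/derivable_big_prod => i; case: (dvel i).
(* The velocity part is the derivative of the form with frozen coefficients. *)
have frozen : \sum_(a : k.-tuple 'I_m) C (val a) (s t) *
    'D_1 (fun x => \prod_(i <- val a) vel s x 0 i) t =
  k%:R * \sum_(mu < m) acc s t 0 mu *
    diag_form k.-1 (fun a => C (mu :: a) (s t)) (vel s t 0).
  have symCt : symmetric_coef k (fun a => C a (s t)).
    by move=> a b sz_a ab; rewrite (symC a b).
  rewrite -(derive_val (is_derive := is_derive_diag_form symCt dvel)).
  by apply/esym/derive_val; exact: is_derive_big_sum.
apply: is_derive_eq.
  apply: is_derive_big_sum => a; apply: is_derive_mul (dprod a).
  by apply: is_derive_comp_curve => //; apply: dC; rewrite size_tuple.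
by rewrite big_split /= frozen.
Qed.

End Coordinates.

Section Lagrangian.
Variables (R : realType) (m N : nat).
Variables (Gc : seq 'I_m -> 'rV[R]_m -> R) (Ac : 'I_m -> 'rV[R]_m -> R).
Implicit Types (q v w : 'rV[R]_m) (l b : 'I_m).

Lemma GfullE q v : Gfull Gc N.+1 q v = diag_form N.+1.*2 (Gc^~ q) (v 0).
Proof. by []. Qed.

Lemma natr_doubleS_neq0 : N.+1.*2%:R != 0 :> R.
Proof. by rewrite pnatr_eq0 double_eq0. Qed.

Lemma pd_Lag_velocity q v l : symmetric_coef N.+1.*2 Gc -> 0 < Gfull Gc N.+1 q v ->
  pd l (Lag Gc Ac N.+1 q) v =
  Gfull Gc N.+1 q v `^ ((N.+1.*2%:R)^-1 - 1) *
    diag_form N.*2.+1 (fun a => Gc (l :: a) q) (v 0) + Ac l q.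
Proof.
move=> symG G_gt0; apply: pd_line; rewrite /Lag.
have symGq : symmetric_coef N.+1.*2 (Gc^~ q) by move=> a b sz_a ab; rewrite (symG a b).
have dcoord i : is_derive (0 : R) 1 (fun h => (h *: ebasis l + v) 0 i) (ebasis l 0 i).
  exact: is_derive_line_coord.
have dGv := is_derive_diag_form symGq dcoord.
have v0 : 0 *: ebasis l + v = v by rewrite scale0r add0r.
apply: is_derive_eq.
  apply: is_deriveD; first by apply: is_derive_powR dGv _; rewrite /= v0.
  exact: is_derive_big_sum.
rewrite /= v0 sum_ebasis_mul -GfullE; congr (_ + _).
  by rewrite (mulrC _ (_ `^ _)) -mulrA mulKf ?natr_doubleS_neq0.
rewrite -(sum_ebasis_mul l (Ac^~ q)); apply: eq_bigr => mu _.
by rewrite scaler0 add0r mulrC.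
Qed.

Lemma pd_Lag_position q v l :
  (forall a, size a = N.+1.*2 -> differentiable (Gc a) q) ->
  (forall mu, differentiable (Ac mu) q) -> 0 < Gfull Gc N.+1 q v ->
  pd l (fun q' => Lag Gc Ac N.+1 q' v) q =
  (N.+1.*2%:R)^-1 * Gfull Gc N.+1 q v `^ ((N.+1.*2%:R)^-1 - 1) *
    diag_form N.+1.*2 (fun a => pd l (Gc a) q) (v 0)
  + \sum_(mu < m) v 0 mu * pd l (Ac mu) q.
Proof.
move=> dG dA G_gt0; apply: pd_line; rewrite /Lag.
have dGl (a : N.+1.*2.-tuple 'I_m) :
    is_derive (0 : R) 1 (fun h => Gc (val a) (h *: ebasis l + q)) (pd l (Gc (val a)) q).
  by apply: is_derive_line; apply: dG; rewrite size_tuple.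
have dGv : is_derive (0 : R) 1 (fun h => Gfull Gc N.+1 (h *: ebasis l + q) v)
    (diag_form N.+1.*2 (fun a => pd l (Gc a) q) (v 0)).
  apply: is_derive_eq; first exact: is_derive_big_sum.
  by apply: eq_bigr => a _ /=; rewrite scaler0 add0r mulrC.
have q0 : 0 *: ebasis l + q = q by rewrite scale0r add0r.
have dAl mu : is_derive (0 : R) 1 (fun h => Ac mu (h *: ebasis l + q)) (pd l (Ac mu) q).
  exact: is_derive_line.
apply: is_derive_eq.
  apply: is_deriveD; first by apply: is_derive_powR dGv _; rewrite q0.
  exact: is_derive_big_sum.
by rewrite /= q0.
Qed.

(* The right-hand side is the Euler-Lagrange expression of [Lag] where [G = 1]. *)
Lemma Eexpr_unit_G b q v w : Gfull Gc N.+1 q v = 1 ->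
  Eexpr Gc Ac N.+1 b q v w =
    (N.+1.*2%:R)^-1 * diag_form N.+1.*2 (fun a => pd b (Gc a) q) (v 0)
    + \sum_(mu < m) v 0 mu * pd b (Ac mu) q
    - ((N.*2.+1)%:R * \sum_(mu < m) w 0 mu *
          diag_form N.*2 (fun a => Gc [:: b, mu & a] q) (v 0)
       + \sum_(a : N.*2.+1.-tuple 'I_m) (\prod_(i <- val a) v 0 i) *
           \sum_(mu < m) v 0 mu * pd mu (Gc (b :: val a)) q
       + \sum_(mu < m) v 0 mu * pd mu (Ac b) q).
Proof.
move=> G1; rewrite /Eexpr G1 powR1 mul1r.
set c := (N.+1.*2%:R)^-1.
have dG_terms : \sum_(mu < m) \sum_(a : (N.+1.*2 - 1).-tuple 'I_m)
      (c * pd b (Gc (mu :: val a)) q - pd mu (Gc (b :: val a)) q) *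
        v 0 mu * \prod_(i <- val a) v 0 i =
    c * diag_form N.+1.*2 (fun a => pd b (Gc a) q) (v 0) -
    \sum_(a : N.*2.+1.-tuple 'I_m) (\prod_(i <- val a) v 0 i) *
      \sum_(mu < m) v 0 mu * pd mu (Gc (b :: val a)) q.
  under eq_bigr do under eq_bigr do rewrite !mulrBl.
  under eq_bigr do rewrite sumrB.
  rewrite sumrB diag_form_cons mulr_sumr; congr (_ - _).
    apply: eq_bigr => mu _; rewrite /diag_form !mulr_sumr.
    by apply: eq_bigr => a _; ring.
  rewrite exchange_big /=; apply: eq_bigr => a _; rewrite mulr_sumr.
  by apply: eq_bigr => mu _; ring.
have acc_terms : (N.+1.*2%:R - 1) * \sum_(mu < m) \sum_(a : (N.+1.*2 - 2).-tuple 'I_m)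
      Gc [:: b, mu & val a] q * w 0 mu * \prod_(i <- val a) v 0 i =
    N.*2.+1%:R * \sum_(mu < m) w 0 mu *
      diag_form N.*2 (fun a => Gc [:: b, mu & a] q) (v 0).
  congr (_ * _); first by rewrite doubleS mulrS addrC addrK.
  have -> : (N.+1.*2 - 2 = N.*2)%N by rewrite doubleS subSS subn1.
  apply: eq_bigr => mu _; rewrite /diag_form mulr_sumr.
  by apply: eq_bigr => a _; ring.
have F_terms : \sum_(mu < m) Fc Ac b mu q * v 0 mu =
    \sum_(mu < m) v 0 mu * pd b (Ac mu) q - \sum_(mu < m) v 0 mu * pd mu (Ac b) q.
  by rewrite -sumrB; apply: eq_bigr => mu _; rewrite /Fc; ring.
rewrite dG_terms acc_terms F_terms; ring.
Qed.

End Lagrangian.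

Theorem lemma5p4 (R : realType) (m N : nat) (HN : (1 <= N)%N)
  (U : set 'rV[R]_m) (hU : open U)
  (Gc : seq 'I_m -> 'rV[R]_m -> R) (Ac : 'I_m -> 'rV[R]_m -> R)
  (Gsmooth : forall a : seq 'I_m, size a = N.*2 -> smooth_on U (Gc a))
  (Gsym : forall a b : seq 'I_m, size a = N.*2 -> perm_eq a b -> Gc a = Gc b)
  (Gpos : forall q v : 'rV[R]_m, U q -> v != 0 -> 0 < Gfull Gc N q v)
  (Asmooth : forall mu : 'I_m, smooth_on U (Ac mu))
  (s : R -> 'rV[R]_m) (s_smooth : smooth_on setT s)
  (sU : forall t, U (s t)) (s_reg : forall t, vel s t != 0)
  (EL : forall (l : 'I_m) (t : R), ELexpr Gc Ac N s l t = 0)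
  (WG : forall t, Gfull Gc N (s t) (vel s t) = 1) :
  forall (b : 'I_m) (t : R), Eexpr Gc Ac N b (s t) (vel s t) (acc s t) = 0.
Proof.
move=> b t; case: N HN Gsmooth Gsym Gpos EL WG => [//|N] _ Gsmooth Gsym _ EL WG.
have ds : differentiable s t := s_smooth [::] t I.
have dv : derivable (vel s) t 1 := diff_derivable (s_smooth [:: 1] t I).
have dG a : size a = N.+1.*2 -> differentiable (Gc a) (s t).
  by move=> sz_a; exact: Gsmooth sz_a [::] (s t) (sU t).
have dA mu : differentiable (Ac mu) (s t) := Asmooth mu [::] (s t) (sU t).
(* [WG] already gives G > 0 along the curve. *)
have G_gt0 t' : 0 < Gfull Gc N.+1 (s t') (vel s t') by rewrite WG ltr01.
have momentum : (fun t' => pd b (Lag Gc Ac N.+1 (s t')) (vel s t')) =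
    fun t' => diag_form N.*2.+1 (fun a => Gc (b :: a) (s t')) (vel s t' 0) + Ac b (s t').
  by apply/funext => t'; rewrite pd_Lag_velocity // WG powR1 mul1r.
have dmomentum := is_deriveD
  (is_derive_diag_form_curve (symmetric_coef_cons b Gsym) ds dv
     (fun a sz_a => dG (b :: a) (congr1 S sz_a)))
  (is_derive_comp_curve ds (dA b)).
rewrite Eexpr_unit_G // -[RHS](EL b t) /ELexpr pd_Lag_position // WG powR1 mulr1 momentum.
by rewrite (derive_val (is_derive := dmomentum)).
Qed.
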